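(* Let $K\ge3$, $p\in(0,1)$ and $f\in\mathcal M_p$ with $\sigma_f$ the identity. Then for every $r\in\{2,\dots,K-1\}$, $$\sum_{i=1}^{r-1}\Big(f([K-r+1]\mid[K-i+1])-(K-r+1)\,f(K-r+2\mid[K-i+1])\Big)D(f,i)=1,$$ and consequently $$D(f,r)=\frac{1-\sum_{i=1}^{r-1}\big(f([K-r]\mid[K-i+1])-(K-r)f(K-r+1\mid[K-i+1])\big)D(f,i)}{1-(K-r+1)f(K-r+1\mid[K-r+1])}.$$
   Context: Items are $[K]=\{1,\dots,K\}$, $\mathcal S=\{S\subseteq[K]:|S|\ge2\}$, $[n]=\{1,\dots,n\}$. A preference $f$ is a family of numbers $f(i\mid S)$, $S\in\mathcal S$, $i\in[K]$; for $S'\subseteq S$, $f(S'\mid S)=\sum_{i\in S'}f(i\mid S)$. For $p\in(0,1)$, $\mathcal M_p$ consists of all $f$ with (i) $f(i\mid S)>0$ iff $i\in S$; (ii) $\sum_{i\in S}f(i\mid S)=1$; (iii) a bijection $\sigma_f:[K]\to[K]$ such that $f(i\mid S)\le pf(i'\mid S)$ for $i,i'\in S$ with $\sigma_f(i')<\sigma_f(i)$. Define $\Delta^i_{K-r+1}=f(K-r+1\mid[K-i+1])-f(K-r+2\mid[K-i+1])$ for $r\in[K-1]$, $i\in[r-1]$; $D(f,1)=\frac{1}{1-Kf(K\mid[K])}$; for $r\in\{2,\dots,K-1\}$, $D(f,r)=\frac{(K-r+1)\sum_{i=1}^{r-1}\Delta^i_{K-r+1}D(f,i)}{1-(K-r+1)f(K-r+1\mid[K-r+1])}$.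 *)

From HB Require Import structures.
From mathcomp Require Import all_boot all_order all_algebra.
Set Implicit Arguments. Unset Strict Implicit. Unset Printing Implicit Defensive.
Import Order.TTheory GRing.Theory Num.Theory.
Local Open Scope ring_scope.

(* Items 1..K are represented by the ordinals 1..K of 'I_K.+1; the ordinal 0
   is a dummy that never belongs to an admissible set. *)

Definition kpref (K m : nat) : {set 'I_K.+1} := [set i : 'I_K.+1 | (0 < i)%N && (i <= m)%N].

Definition admissible (K : nat) (S : {set 'I_K.+1}) : bool :=
  (S \subset kpref K K) && (2 <= #|S|)%N.

Section Pref.
Variable R : realFieldType.
Variable K : nat.
Variable f : {set 'I_K.+1} -> 'I_K.+1 -> R.

Definition fset_pref (S' S : {set 'I_K.+1}) : R := \sum_(i in S') f S i.

Definition in_Mp_sigma (p : R) (sigma : nat -> nat) : Prop :=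
  [/\ {in [pred i : nat | (0 < i <= K)%N] &, injective sigma},
      (forall i : nat, (0 < i <= K)%N -> (0 < sigma i <= K)%N),
      (forall S, admissible S -> forall i : 'I_K.+1, (0 < i)%N ->
          (0 < f S i) = (i \in S)),
      (forall S, admissible S -> \sum_(i in S) f S i = 1) &
      (forall S, admissible S -> forall i i' : 'I_K.+1, i \in S -> i' \in S ->
          (sigma i' < sigma i)%N -> f S i <= p * f S i')].

Definition in_Mp (p : R) : Prop := exists sigma, in_Mp_sigma p sigma.

Definition fp (j m : nat) : R := f (kpref K m) (inord j).

(* D(f,r): Dlist r = [:: D(f,1); ...; D(f,r)] *)
Fixpoint Dlist (r : nat) : seq R :=
  match r with
  | 0 => [::]
  | n.+1 =>
    let l := Dlist n in
    let d :=
      if n is 0 then (1 - K%:R * fp K K)^-1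
      else ((K - n)%:R *
              \sum_(1 <= i < n.+1) (fp (K - n) (K - i + 1) - fp (K - n + 1) (K - i + 1))
                                   * nth 0 l i.-1)
           / (1 - (K - n)%:R * fp (K - n) (K - n))
    in rcons l d
  end.

Definition D (r : nat) : R := nth 0 (Dlist r) r.-1.

End Pref.

From HB Require Import structures.
From mathcomp Require Import all_boot all_order all_algebra zify ring lra.
Import Order.TTheory GRing.Theory Num.Theory.
Local Open Scope ring_scope.

(* Write S(r) for the sum of the first claim of the theorem and
   T(r) = sum_{i<r} Delta^i_{K-r+1} D(f,i), so that the defining recurrence
   reads  D(f,r) (1 - (K-r+1) f(K-r+1 | [K-r+1])) = (K-r+1) T(r)  for r >= 2.
   Splitting f([K-r+1] | .) = f([K-r] | .) + f(K-r+1 | .) shows that the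
   sum in the second claim equals S(r) - (K-r+1) T(r); appending the term
   i = r to it and using f([K-r] | [K-r+1]) = 1 - f(K-r+1 | [K-r+1]) gives
     S(r+1) = S(r) - (K-r+1) T(r) + (1 - (K-r+1) f(K-r+1 | [K-r+1])) D(f,r).
   By the recurrence the last two terms cancel, and S(2) = 1 by the
   definition of D(f,1); hence S(r) = 1 for all r, which is the first claim,
   and the second follows by substituting S(r) = 1 into the recurrence.
   The only analytic input is that the denominators 1 - m f(m | [m]) are
   nonzero: since sigma_f is the identity and p < 1, item m is strictly the
   least likely in [m], so m f(m | [m]) < sum_j f(j | [m]) = 1.
   The file first relates the item sets [m] to integer ranges, then unfolds
   the list-based definition of D, then proves the positivity of the
   denominators, and finally carries out the induction on S. *)

Lemma mem_kpref_inord {K m j : nat} : (j <= K)%N ->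
  (@inord K j \in kpref K m) = (0 < j <= m)%N.
Proof. by move=> hj; rewrite inE inordK. Qed.

Lemma sum_kpref {R : nmodType} {K m : nat} (F : 'I_K.+1 -> R) : (m <= K)%N ->
  \sum_(j in kpref K m) F j = \sum_(1 <= j < m.+1) F (inord j).
Proof.
elim: m => [_|m IH hm].
  rewrite big_geq // big_pred0 // => i; rewrite inE.
  by case: (nat_of_ord i) => [|n]; rewrite ?andbF.
have -> : kpref K m.+1 = inord m.+1 |: kpref K m.
  apply/setP => i; rewrite !inE -val_eqE /= inordK //.
  by rewrite [(i <= m.+1)%N]leq_eqVlt ltnS; case: eqP => [->|].
rewrite big_setU1 ?mem_kpref_inord ?ltnn //.
by rewrite [RHS]big_nat_recr // IH ?(ltnW hm) //; exact: addrC.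
Qed.

Lemma kpref_admissible {K m : nat} : (2 <= m <= K)%N -> admissible (kpref K m).
Proof.
move=> /andP[h2 hK]; apply/andP; split.
  by apply/subsetP => i; rewrite !inE => /andP[-> /leq_trans ->].
have -> : 2%N = #|[set (@inord K 1); inord m]|.
  rewrite cards2; congr (_.+1); apply/eqP; rewrite -val_eqE /= !inordK //; lia.
apply: subset_leq_card; apply/subsetP => i; rewrite !inE => /orP[]/eqP->;
  rewrite inordK /=; lia.
Qed.

Section ChoiceModel.
Set Implicit Arguments. Unset Strict Implicit.
Variable R : realFieldType.
Variable K : nat.
Variable f : {set 'I_K.+1} -> 'I_K.+1 -> R.

Lemma fset_pref_kprefS (a b : nat) : (1 <= a <= K)%N -> (b <= K)%N ->
  fset_pref f (kpref K a) (kpref K b)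
  = fset_pref f (kpref K a.-1) (kpref K b) + fp f a b.
Proof.
case: a => [|a] ha hb; first lia.
rewrite /fset_pref !sum_kpref /=; try lia.
by rewrite [LHS]big_nat_recr.
Qed.

Lemma size_Dlist (n : nat) : size (Dlist f n) = n.
Proof. by elim: n => [//|n IH]; rewrite /= size_rcons IH. Qed.

Lemma nth_Dlist (n i : nat) : (0 < i <= n)%N -> nth 0 (Dlist f n) i.-1 = D f i.
Proof.
elim: n => [|n IH] hi; first lia.
have [lt_i_n1 | ge_i_n1] := ltnP i n.+1; last by have -> : i = n.+1 by lia.
have [d ->] : exists d, Dlist f n.+1 = rcons (Dlist f n) d by eexists.
rewrite nth_rcons (size_Dlist n) (_ : (i.-1 < n)%N = true) ?IH //; lia.
Qed.

Lemma D_one : D f 1 = (1 - K%:R * fp f K K)^-1.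
Proof. by []. Qed.

Lemma D_rec (r : nat) : (2 <= r <= K)%N ->
  D f r = ((K - r + 1)%:R * \sum_(1 <= i < r)
      (fp f (K - r + 1) (K - i + 1) - fp f (K - r + 2) (K - i + 1)) * D f i)
    / (1 - (K - r + 1)%:R * fp f (K - r + 1) (K - r + 1)).
Proof.
case: r => [|[|n]] hr; try lia.
rewrite /D /= -/(Dlist f n.+1) nth_rcons size_Dlist ltnn eqxx.
have -> : (K - n.+1 + 1 = K - n.+2 + 2)%N by lia.
have -> : (K - n.+1 = K - n.+2 + 1)%N by lia.
congr (_ * _ / _); apply: eq_big_nat => i hi; rewrite nth_Dlist //; lia.
Qed.

Definition lhs_sum (r : nat) : R :=
  \sum_(1 <= i < r)
     (fset_pref f (kpref K (K - r + 1)) (kpref K (K - i + 1))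
      - (K - r + 1)%:R * fp f (K - r + 2) (K - i + 1)) * D f i.

Definition delta_sum (r : nat) : R :=
  \sum_(1 <= i < r)
     (fp f (K - r + 1) (K - i + 1) - fp f (K - r + 2) (K - i + 1)) * D f i.

Lemma shifted_sum_eq (r : nat) : (1 <= r <= K)%N ->
  \sum_(1 <= i < r)
     (fset_pref f (kpref K (K - r)) (kpref K (K - i + 1))
      - (K - r)%:R * fp f (K - r + 1) (K - i + 1)) * D f i
  = lhs_sum r - (K - r + 1)%:R * delta_sum r.
Proof.
move=> hr; rewrite /lhs_sum /delta_sum mulr_sumr -sumrB.
apply: eq_big_nat => i hi.
rewrite (@fset_pref_kprefS (K - r + 1)); try lia.
by rewrite (_ : (K - r + 1).-1 = (K - r)%N) ?natrD; [ring | lia].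
Qed.

Section Mp.
Variable p : R.
Hypothesis f_in_Mp : in_Mp_sigma f p id.
Hypothesis p_lt1 : p < 1.

Lemma fset_pref_kpref_full (m : nat) : (2 <= m <= K)%N ->
  fset_pref f (kpref K m) (kpref K m) = 1.
Proof. by case: f_in_Mp => _ _ _ f_sum1 _ hm; apply/f_sum1/kpref_admissible. Qed.

Lemma sum_fp_kpref (m : nat) : (2 <= m <= K)%N ->
  \sum_(1 <= j < m.+1) fp f j m = 1.
Proof.
move=> hm; rewrite /fp -sum_kpref; last by case/andP: hm.
exact: fset_pref_kpref_full.
Qed.

Lemma fp_last_lt (m j : nat) : (2 <= m <= K)%N -> (1 <= j < m)%N ->
  fp f m m < fp f j m.
Proof.
case: f_in_Mp => _ _ f_pos _ f_ord hm hj.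
have fj_pos : 0 < fp f j m.
  by rewrite /fp f_pos ?kpref_admissible ?mem_kpref_inord ?inordK //; lia.
have fm_le : fp f m m <= p * fp f j m.
  by apply: f_ord; rewrite ?kpref_admissible ?mem_kpref_inord ?inordK //; lia.
apply: (le_lt_trans fm_le); rewrite -subr_gt0 -[X in X - _]mul1r -mulrBl.
by rewrite mulr_gt0 // subr_gt0.
Qed.

Lemma denom_gt0 (m : nat) : (2 <= m <= K)%N -> 0 < 1 - m%:R * fp f m m.
Proof.
move=> hm; rewrite subr_gt0 -[X in _ < X](sum_fp_kpref hm).
case: m hm => [|m] hm; first lia.
rewrite big_nat_recr //= mulr_natl mulrSr ltrD2r.
have -> : fp f m.+1 m.+1 *+ m = \sum_(1 <= j < m.+1) fp f m.+1 m.+1.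
  by rewrite sumr_const_nat subn1.
by apply: ltr_sum_nat => [|j hj]; [lia | apply: fp_last_lt; lia].
Qed.

Lemma denom_neq0 (r : nat) : (1 <= r <= K - 1)%N ->
  1 - (K - r + 1)%:R * fp f (K - r + 1) (K - r + 1) != 0.
Proof. by move=> hr; rewrite gt_eqF // denom_gt0 //; lia. Qed.

Lemma lhs_sum_step (r : nat) : (1 <= r <= K - 1)%N ->
  lhs_sum r.+1 = lhs_sum r - (K - r + 1)%:R * delta_sum r
     + (1 - (K - r + 1)%:R * fp f (K - r + 1) (K - r + 1)) * D f r.
Proof.
move=> hr; rewrite {1}/lhs_sum big_nat_recr; last lia.
rewrite (_ : (K - r.+1 + 1 = K - r)%N); last lia.
rewrite (_ : (K - r.+1 + 2 = K - r + 1)%N); last lia.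
rewrite shifted_sum_eq; last lia.
have prefix_mass : fset_pref f (kpref K (K - r)) (kpref K (K - r + 1))
                   = 1 - fp f (K - r + 1) (K - r + 1).
  have full := @fset_pref_kpref_full (K - r + 1) ltac:(lia).
  rewrite (@fset_pref_kprefS (K - r + 1)) in full; try lia.
  by rewrite -full (_ : (K - r + 1).-1 = (K - r)%N) ?addrK // addn1.
by rewrite prefix_mass natrD /=; ring.
Qed.

Lemma lhs_sum_eq1 (r : nat) : (1 <= r <= K - 1)%N -> lhs_sum r.+1 = 1.
Proof.
elim: r => [|r IH] hr; first lia.
rewrite lhs_sum_step //.
case: r IH hr => [|r] IH hr.
  have -> : (K - 1 + 1 = K)%N by lia.
  rewrite /lhs_sum /delta_sum !big_geq // mulr0 subr0 add0r D_one mulfV //.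
  by rewrite gt_eqF // denom_gt0 //; lia.
rewrite IH; last lia.
rewrite (D_rec (r := r.+2)) -/(delta_sum r.+2); last lia.
by field; rewrite natr1 -addn1; apply: denom_neq0; lia.
Qed.

End Mp.
End ChoiceModel.

Theorem mainTheorem7 (R : realFieldType) (K : nat) (p : R)
  (f : {set 'I_K.+1} -> 'I_K.+1 -> R) :
  (3 <= K)%N -> 0 < p < 1 -> in_Mp_sigma f p id ->
  forall r : nat, (2 <= r <= K - 1)%N ->
    \sum_(1 <= i < r)
       (fset_pref f (kpref K (K - r + 1)) (kpref K (K - i + 1))
        - (K - r + 1)%:R * fp f (K - r + 2) (K - i + 1)) * D f i = 1
    /\
    D f r =
      (1 - \sum_(1 <= i < r)
             (fset_pref f (kpref K (K - r)) (kpref K (K - i + 1))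
              - (K - r)%:R * fp f (K - r + 1) (K - i + 1)) * D f i)
      / (1 - (K - r + 1)%:R * fp f (K - r + 1) (K - r + 1)).
Proof.
move=> _ /andP[_ p_lt1] f_in_Mp [|r] hr; first lia.
have S_eq1 : lhs_sum f r.+1 = 1 by apply: (lhs_sum_eq1 f_in_Mp p_lt1); lia.
split; first exact: S_eq1.
rewrite shifted_sum_eq; last lia.
rewrite S_eq1 D_rec -/(delta_sum f r.+1); last lia.
by field; rewrite natr1 -addn1; apply: (denom_neq0 f_in_Mp p_lt1); lia.
Qed.
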